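(* Let $q\equiv 1\pmod 4$ be a prime power. If $\psi$ is a bijection from the vertex set of a triangle $\{x,y,z\}$ of $Tr(SP_q)$ to the vertex set of a triangle $\{x',y',z'\}$ of $Tr(SP_q)$ that maps each of the three edges to an edge of the same sign, then $\psi$ extends to a (sign-preserving) automorphism of $Tr(SP_q)$.
   Context: A signified graph is a simple graph with each edge labelled positive or negative; a triangle is a set of three pairwise adjacent vertices; an automorphism is a vertex bijection mapping edges to edges of the same sign and non-edges to non-edges. Let $q\equiv 1\pmod 4$ be a prime power; for $x\in\mathbb{F}_q^*$ let $\mathrm{sq}(x)=+1$ if $x$ is a square and $-1$ otherwise. The Tromp signified Paley graph $Tr(SP_q)$ has vertex set $\{u_i : u\in\mathbb{F}_q\cup\{\infty\},\ i\in\{0,1\}\}$. For $u\ne v$ in $\mathbb{F}_q$, $u_iv_j$ is an edge of sign $\mathrm{sq}(u-v)(-1)^{i+j}$; for $v\in\mathbb{F}_q$, $\infty_iv_j$ is an edge of sign $(-1)^{i+j}$; there are no other edges. *)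

From HB Require Import structures.
From mathcomp Require Import all_boot all_order all_algebra all_field.
Set Implicit Arguments. Unset Strict Implicit. Unset Printing Implicit Defensive.
Import GRing.Theory.
Local Open Scope ring_scope.

(* Vertices of Tr(SP_q): u_i with u in F_q ∪ {∞} (None = ∞), i in {0,1}
   (false = 0, true = 1). *)
Definition trv (F : finFieldType) : finType := (option F * bool)%type.

(* sq x = +1 (true) iff x is a (nonzero) square; used only for x <> 0. *)
Definition is_sq (F : finFieldType) (x : F) : bool := [exists y : F, y * y == x].

(* (-1)^(i+j) = +1 iff i = j. *)
Definition par_pos (i j : bool) : bool := i == j.

Definition tr_adj (F : finFieldType) (a b : trv F) : bool :=
  match a.1, b.1 with
  | Some u, Some v => u != v
  | Some _, None => true
  | None, Some _ => true
  | None, None => false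
  end.

(* sign of the pair (meaningful for edges): true = positive, false = negative.
   For u,v in F: sq(u-v)(-1)^(i+j);  with ∞: (-1)^(i+j). *)
Definition tr_pos (F : finFieldType) (a b : trv F) : bool :=
  match a.1, b.1 with
  | Some u, Some v => is_sq (u - v) == par_pos a.2 b.2
  | _, _ => par_pos a.2 b.2
  end.

Definition tr_triangle (F : finFieldType) (x y z : trv F) : Prop :=
  [/\ tr_adj x y, tr_adj y z & tr_adj x z].

Definition tr_aut (F : finFieldType) (f : trv F -> trv F) : Prop :=
  bijective f /\
  (forall a b, tr_adj (f a) (f b) = tr_adj a b) /\
  (forall a b, tr_adj a b -> tr_pos (f a) (f b) = tr_pos a b).

From HB Require Import structures.
From mathcomp Require Import all_boot all_order all_algebra all_field.
From mathcomp Require Import cyclic.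
From mathcomp Require Import ring.
Set Implicit Arguments. Unset Strict Implicit. Unset Printing Implicit Defensive.
Import GRing.Theory.
Local Open Scope ring_scope.

(* Write a vertex u_i as a pair (u, i) with u in F ∪ {∞}.
   - Quadratic character: for #|F| = 2m + 1, Euler's criterion
     (x is a square iff x^m = 1) makes "is a square" multiplicative on F^*;
     when m is even, -1 is a square, so sq(-x) = sq(x).
   - Switching automorphisms: a permutation phi of F ∪ {∞} together with a
     switching set c gives the map (u, i) |-> (phi u, i + c u); it is an
     automorphism exactly when phi changes the sign of a pair iff the pair is
     switched.  Translations, multiplication by a nonzero square, global
     switching and the inversion u |-> -1/u (switched at the non-squares) are
     of this kind.
   - Normal form: these automorphisms send any triangle x, y, z to
     (∞, 0), (0, b), (w, c) with w <> 0; two normal triangles with the same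
     signs have b, c equal and sq(w) = sq(w'), so a scaling by the square
     w'/w maps one onto the other. *)

Lemma is_sqP (F : finFieldType) (x : F) : reflect (exists y, y * y = x) (is_sq x).
Proof. by apply: (iffP existsP) => [[y /eqP]|[y]] <-; exists y. Qed.

Lemma is_sq0 (F : finFieldType) : is_sq (0 : F).
Proof. by apply/is_sqP; exists 0; rewrite mul0r. Qed.

Lemma is_sqV (F : finFieldType) (x : F) : is_sq x^-1 = is_sq x.
Proof.
apply/is_sqP/is_sqP => [[y hy]|[y hy]]; exists y^-1; last by rewrite -invfM hy.
by rewrite -invfM hy invrK.
Qed.

Section QuadraticCharacter.
Variables (F : finFieldType) (m : nat).
Hypothesis cardF : #|F| = (2 * m).+1.

Lemma half_order_gt0 : (0 < m)%N.
Proof. by have := finNzRing_gt1 F; rewrite cardF; case: m. Qed.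

Lemma expf_unit_order (x : F) : x != 0 -> x ^+ (2 * m) = 1.
Proof. by move=> nz; apply: (mulfI nz); rewrite mulr1 -exprS -cardF expf_card. Qed.

Lemma exists_prim_root : exists z : F, (2 * m).-primitive_root z.
Proof.
suff /hasP[z _ pz] : has (2 * m).-primitive_root (enum (predC1 (0 : F))).
  by exists z.
apply: has_prim_root; first by rewrite muln_gt0 half_order_gt0.
- by apply/allP => x; rewrite mem_enum unity_rootE => /expf_unit_order->.
- exact: enum_uniq.
- by rewrite -cardE cardC1 cardF.
Qed.

(* Euler's criterion: a unit x is a square iff x^((q-1)/2) = 1; squares are
   the even powers of a primitive root. *)
Lemma is_sq_euler (x : F) : x != 0 -> is_sq x = (x ^+ m == 1).
Proof.
move=> nz; apply/is_sqP/eqP => [[y hy]|xm1].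
  have nzy : y != 0 by apply: contraNneq nz => y0; rewrite -hy y0 mul0r.
  by rewrite -hy -expr2 -exprM expf_unit_order.
have [z pz] := exists_prim_root.
have [[i _] /= xE] := prim_rootP pz (expf_unit_order nz).
have /dvdnP[j iE] : (2 %| i)%N.
  move: xm1; rewrite xE -exprM => /eqP; rewrite -(prim_order_dvd pz).
  by rewrite dvdn_pmul2r // half_order_gt0.
by exists (z ^+ j); rewrite -exprD addnn -mul2n mulnC xE iE.
Qed.

(* The quadratic character is multiplicative on units, because x^m = +-1. *)
Lemma is_sqM (a b : F) : a != 0 -> b != 0 ->
  is_sq (a * b) = (is_sq a == is_sq b).
Proof.
move=> na nb; rewrite !is_sq_euler ?mulf_neq0 // exprMn.
have sign (x : F) : x != 0 -> x ^+ m = 1 \/ x ^+ m = -1.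
  move=> nx; have : (x ^+ m) ^+ 2 == 1 by rewrite -exprM mulnC expf_unit_order.
  by rewrite sqrf_eq1 => /orP[] /eqP; [left|right].
case: (sign a na) => ->; case: (sign b nb) => ->;
  by rewrite ?mulr1 ?mul1r ?mulrNN ?mulr1 ?eqxx //; case: (_ == 1).
Qed.

Hypothesis m_even : ~~ odd m.

Lemma is_sqN1 : is_sq (-1 : F).
Proof.
rewrite is_sq_euler ?oppr_eq0 ?oner_eq0 //.
by rewrite -signr_odd (negbTE m_even).
Qed.

(* Hence sq(-x) = sq(x), which makes the signs of Tr(SP_q) symmetric. *)
Lemma is_sqN (x : F) : is_sq (- x) = is_sq x.
Proof.
have [->|nx] := eqVneq x 0; first by rewrite oppr0.
by rewrite -mulN1r is_sqM ?oppr_eq0 ?oner_eq0 // is_sqN1.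
Qed.

End QuadraticCharacter.

Section SwitchingAutomorphisms.
Variable F : finFieldType.
Implicit Types a b : trv F.

(* The sign of a pair with first components u, v, before the parity
   correction (-1)^(i+j): sq(u - v) on F, and +1 as soon as ∞ is involved. *)
Definition sgn (u v : option F) : bool :=
  match u, v with Some u', Some v' => is_sq (u' - v') | _, _ => true end.

Lemma tr_adjE a b : tr_adj a b = (a.1 != b.1).
Proof. by case: a b => [[u|] i] [[v|] j]. Qed.

Lemma tr_posE a b : tr_pos a b = (sgn a.1 b.1 == (a.2 == b.2)).
Proof. by case: a b => [[u|] i] [[v|] j]. Qed.

Definition switch (phi : option F -> option F) (c : option F -> bool) a : trv F :=
  (phi a.1, a.2 (+) c a.1).

Lemma switch_aut phi psi c : cancel phi psi -> cancel psi phi ->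
  (forall u v, u != v -> sgn (phi u) (phi v) = sgn u v (+) (c u != c v)) ->
  tr_aut (switch phi c).
Proof.
move=> phiK psiK phi_sgn; split; [|split].
- exists (fun a => (psi a.1, a.2 (+) c (psi a.1))) => [[u i]|[u i]] /=;
    by rewrite /switch /= ?phiK ?psiK -addbA addbb addbF.
- by move=> a b; rewrite !tr_adjE /= (inj_eq (can_inj phiK)).
- move=> [u i] [v j]; rewrite tr_adjE /= => uv; rewrite !tr_posE /= phi_sgn //.
  by case: (sgn u v) (c u) (c v) i j => [] [] [] [] [].
Qed.

Lemma aut_id : tr_aut (@id (trv F)).
Proof. by split; [exact: (@Bijective _ _ id id)|]. Qed.

Lemma aut_comp (f g : trv F -> trv F) : tr_aut f -> tr_aut g -> tr_aut (f \o g).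
Proof.
move=> [bf [af pf]] [bg [ag pg]]; split; [exact: bij_comp|split] => a b /=.
  by rewrite af ag.
by move=> ab; rewrite pf ?ag // pg.
Qed.

Lemma aut_inv (f : trv F -> trv F) : tr_aut f -> exists g, tr_aut g /\ cancel f g.
Proof.
move=> [[g fK gK] [af pf]]; exists g; split=> //.
have ag a b : tr_adj (g a) (g b) = tr_adj a b.
  by rewrite -[in RHS](gK a) -[in RHS](gK b) af.
split; [exact: (Bijective gK fK)|split] => // a b ab.
by rewrite -[in RHS](gK a) -[in RHS](gK b) pf // ag.
Qed.

Lemma aut_adj (f : trv F -> trv F) a b : tr_aut f -> tr_adj (f a) (f b) = tr_adj a b.
Proof. by case=> _ []. Qed.

Lemma aut_pos (f : trv F -> trv F) a b :
  tr_aut f -> tr_adj a b -> tr_pos (f a) (f b) = tr_pos a b.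
Proof. by move=> [_ [_ pf]] /pf. Qed.

Definition translate (t : F) := switch (omap (fun u => u + t)) (fun _ => false).

Lemma translate_aut t : tr_aut (translate t).
Proof.
apply: (@switch_aut _ (omap (fun u => u - t))).
- by case=> //= u; rewrite addrK.
- by case=> //= u; rewrite subrK.
- by move=> [u|] [v|] //= _; rewrite addbF [v + t]addrC addrKA.
Qed.

Definition scale_sq (r : F) := switch (omap (fun u => r * r * u)) (fun _ => false).

Lemma scale_sq_aut r : r != 0 -> tr_aut (scale_sq r).
Proof.
move=> nz; have nz2 : r * r != 0 by rewrite mulf_neq0.
apply: (@switch_aut _ (omap (fun u => (r * r)^-1 * u))).
- by case=> //= u; rewrite mulKf.
- by case=> //= u; rewrite mulVKf.
- move=> [u|] [v|] //= _; rewrite -mulrBr addbF.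
  apply/is_sqP/is_sqP => [[y hy]|[y hy]]; last by exists (r * y); rewrite mulrACA hy.
  by exists (r^-1 * y); rewrite mulrACA -invfM hy mulKf.
Qed.

Definition flip (s : bool) := switch id (fun _ => s).

Lemma flip_aut s : tr_aut (flip s).
Proof. by apply: (@switch_aut _ id) => // u v _; rewrite eqxx addbF. Qed.

Lemma aut_to_origin (y : trv F) : y.1 != None ->
  exists g, [/\ tr_aut g, g (None, false) = (None, false) & (g y).1 = Some 0].
Proof.
case: y => [[b|] j] //= _; exists (translate (- b)).
by split; [exact: translate_aut | | rewrite /= subrr].
Qed.

End SwitchingAutomorphisms.

(* The quadratic character is multiplicative and -1 is a square: this is all
   that the inversion below needs from #|F| = 1 mod 4. *)
Section NormalForm.
Variable F : finFieldType.
Hypothesis sq_mul : forall a b : F, a != 0 -> b != 0 ->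
  is_sq (a * b) = (is_sq a == is_sq b).
Hypothesis sq_opp : forall x : F, is_sq (- x) = is_sq x.

Definition inv_point (u : option F) : option F :=
  if u is Some u' then (if u' == 0 then None else Some (- u'^-1)) else Some 0.

Definition invert :=
  switch inv_point (fun u => if u is Some u' then ~~ is_sq u' else false).

Lemma inv_pointK : involutive inv_point.
Proof.
case=> [u|] /=; last by rewrite eqxx.
have [->|nz] := eqVneq u 0 => //=.
by rewrite oppr_eq0 invr_eq0 (negbTE nz) invrN invrK opprK.
Qed.

Lemma invert_aut : tr_aut invert.
Proof.
apply: (@switch_aut _ inv_point); try exact: inv_pointK.
have sq_inv (u : F) : u != 0 -> is_sq (- u^-1) = is_sq u by rewrite sq_opp is_sqV.
move=> [u|] [v|] //= uv; last first.
- by have [->|nv] := eqVneq v 0; rewrite /= ?is_sq0 // sub0r opprK is_sqV; case: is_sq.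
- by have [->|nu] := eqVneq u 0; rewrite /= ?is_sq0 // subr0 sq_inv //; case: is_sq.
have [u0|nu] := eqVneq u 0; have [v0|nv] := eqVneq v 0 => /=.
- by rewrite u0 v0 eqxx in uv.
- by rewrite u0 is_sq0 sub0r sq_opp; case: is_sq.
- by rewrite v0 is_sq0 subr0; case: is_sq.
have -> : - u^-1 - - v^-1 = (u - v) * (u * v)^-1 by field; rewrite nu nv.
have nuv : u - v != 0 by rewrite subr_eq0.
rewrite sq_mul ?invr_eq0 ?mulf_neq0 // is_sqV sq_mul //.
by case: (is_sq (u - v)) (is_sq u) (is_sq v) => [] [] [].
Qed.

Lemma aut_to_infinity (x : trv F) : exists g, tr_aut g /\ g x = (None, false).
Proof.
have [h [ah hx]] : exists h, tr_aut h /\ (h x).1 = None.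
  case: x => [[a|] i]; last by exists id; split; [exact: aut_id|].
  exists (invert \o translate (- a)).
  split; first exact: aut_comp invert_aut (translate_aut _).
  by rewrite /= subrr eqxx.
exists (flip (h x).2 \o h); split; first exact: aut_comp (flip_aut _ _) ah.
by rewrite /= /flip /switch /= hx addbb.
Qed.

Lemma normal_form (x y z : trv F) : tr_triangle x y z ->
  exists g (w : F) (b c : bool),
    [/\ tr_aut g, g x = (None, false), g y = (Some 0, b), g z = (Some w, c)
       & w != 0].
Proof.
move=> [Txy Tyz Txz].
have [g1 [a1 g1x]] := aut_to_infinity x.
have y1 : (g1 y).1 != None.
  by move: Txy; rewrite -(aut_adj x y a1) tr_adjE g1x eq_sym.
have [g2 [a2 g2inf g2y]] := aut_to_origin y1.
have ag : tr_aut (g2 \o g1) := aut_comp a2 a1.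
have gx : (g2 \o g1) x = (None, false) by rewrite /= g1x.
have := aut_adj x z ag; have := aut_adj y z ag.
rewrite Tyz Txz !tr_adjE gx g2y.
case gz : ((g2 \o g1) z).1 => [w|] // nw _.
exists (g2 \o g1), w, ((g2 \o g1) y).2, ((g2 \o g1) z).2.
split => //; rewrite -?g2y -?gz -?surjective_pairing //.
by apply: contraNneq nw => ->.
Qed.

(* Two normal triangles with the same signs are related by scaling with the
   square w'/w: equal signs force b = b', c = c' and sq(w) = sq(w'). *)
Lemma normal_triangle_aut (w w' : F) (b c b' c' : bool) : w != 0 -> w' != 0 ->
  tr_pos (None, false) (Some (0 : F), b') = tr_pos (None, false) (Some (0 : F), b) ->
  tr_pos (None, false) (Some w', c') = tr_pos (None, false) (Some w, c) ->
  tr_pos (Some (0 : F), b') (Some w', c') = tr_pos (Some 0, b) (Some w, c) ->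
  exists h : trv F -> trv F, [/\ tr_aut h, h (None, false) = (None, false),
                h (Some 0, b) = (Some 0, b') & h (Some w, c) = (Some w', c')].
Proof.
rewrite /tr_pos /= /par_pos !sub0r !sq_opp => nw nw' eb ec.
have -> : b' = b by case: b b' eb => [] [].
have -> : c' = c by case: c c' ec => [] [].
move=> esq; have /is_sqP[r rE] : is_sq (w' / w).
  rewrite sq_mul ?invr_eq0 // is_sqV.
  by case: (is_sq w) (is_sq w') (b == c) esq => [] [] [].
have nr : r != 0.
  by apply: contraNneq (mulf_neq0 nw' (invr_neq0 nw)) => r0; rewrite -rE r0 mul0r.
exists (scale_sq r); split; first exact: scale_sq_aut.
- by [].
- by rewrite /scale_sq /switch /= mulr0 addbF.
- by rewrite /scale_sq /switch /= rE mulfVK // addbF.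
Qed.

End NormalForm.

Lemma card_1mod4 (n : nat) : (n %% 4 = 1)%N -> n = (2 * (2 * (n %/ 4))).+1.
Proof. by move=> n4; rewrite {1}(divn_eq n 4) n4 addn1 mulnA mulnC. Qed.

(* Both triangles are brought to normal form, matched by a scaling, and the
   second normalisation is undone. *)
Theorem mainTheorem7 (F : finFieldType) (hq : (#|F| %% 4 = 1)%N)
  (x y z x' y' z' : trv F) :
  tr_triangle x y z -> tr_triangle x' y' z' ->
  tr_pos x' y' = tr_pos x y -> tr_pos y' z' = tr_pos y z ->
  tr_pos x' z' = tr_pos x z ->
  exists f : trv F -> trv F,
    [/\ tr_aut f, f x = x', f y = y' & f z = z'].
Proof.
move=> T T' pxy pyz pxz.
have cardF := card_1mod4 hq.
have sq_mul := is_sqM cardF.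
have m_even : ~~ odd (2 * (#|F| %/ 4)) by rewrite oddM.
have sq_opp := is_sqN cardF m_even.
have [g [w [b [c [ag gx gy gz nw]]]]] := normal_form sq_mul sq_opp T.
have [g' [w' [b' [c' [ag' gx' gy' gz' nw']]]]] := normal_form sq_mul sq_opp T'.
have [gi [agi g'K]] := aut_inv ag'.
have normal_signs a1 a2 a1' a2' : tr_adj a1 a2 -> tr_adj a1' a2' ->
    tr_pos a1' a2' = tr_pos a1 a2 -> tr_pos (g' a1') (g' a2') = tr_pos (g a1) (g a2).
  by move=> A A' p; rewrite !aut_pos.
have [[Txy Tyz Txz] [Txy' Tyz' Txz']] := (T, T').
have [h [ah hinf h0 hw]] : exists h : trv F -> trv F, [/\ tr_aut h,
    h (None, false) = (None, false), h (Some 0, b) = (Some 0, b')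
    & h (Some w, c) = (Some w', c')].
  apply: normal_triangle_aut => //.
  - by have := normal_signs _ _ _ _ Txy Txy' pxy; rewrite gx gy gx' gy'.
  - by have := normal_signs _ _ _ _ Txz Txz' pxz; rewrite gx gz gx' gz'.
  - by have := normal_signs _ _ _ _ Tyz Tyz' pyz; rewrite gy gz gy' gz'.
exists (gi \o h \o g); split; first exact: aut_comp (aut_comp agi ah) ag.
- by rewrite /= gx hinf -gx' g'K.
- by rewrite /= gy h0 -gy' g'K.
- by rewrite /= gz hw -gz' g'K.
Qed.
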